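(* If $\pi$ is a permutation with exactly one descent, then $\mu(1,\pi)=-\mu(21,\pi)$.
   Context: A permutation of length $n$ is an arrangement of $1,\dots,n$; $1$ denotes the permutation of length one and $21$ the decreasing permutation of length two. The permutation poset is ordered by pattern containment: $\sigma\le\pi$ if $\pi$ has a subsequence in the same relative order as $\sigma$. A descent of $\pi$ is an index $i$ with $\pi_i>\pi_{i+1}$. $\mu$ is the Möbius function of this poset: $\mu(a,a)=1$, $\mu(a,b)=-\sum_{a\le z<b}\mu(a,z)$ for $a<b$, $\mu(a,b)=0$ if $a\not\le b$. *)

From mathcomp Require Import all_boot all_order all_algebra.
Set Implicit Arguments. Unset Strict Implicit. Unset Printing Implicit Defensive.
Import GRing.Theory Num.Theory.

Definition is_perm (s : seq nat) : bool := perm_eq s (iota 1 (size s)).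

Definition std (s : seq nat) : seq nat :=
  [seq (count (fun y => y < x) s).+1 | x <- s].

Fixpoint subseqs (s : seq nat) : seq (seq nat) :=
  if s is x :: s' then [seq x :: t | t <- subseqs s'] ++ subseqs s' else [:: [::]].

Definition contains (sigma pi : seq nat) : bool :=
  has (fun t => std t == sigma) (subseqs pi).

Definition perms_below (pi : seq nat) : seq (seq nat) :=
  flatten [seq permutations (iota 1 k) | k <- iota 0 (size pi)].

(* Moebius function: mu(a,a)=1, mu(a,b) = - sum_{a<=z<b} mu(a,z) if a<b, 0 otherwise.
   Any z < b has size < size b, so recursion with fuel (size b) suffices. *)
Fixpoint mu_aux (k : nat) (a b : seq nat) : int :=
  if a == b then 1%R
  else if ~~ contains a b then 0%R
  else match k with
       | 0 => 0%R
       | k'.+1 => (- \sum_(z <- perms_below b | contains a z && contains z b)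
                      mu_aux k' a z)%R
       end.

Definition mu (a b : seq nat) : int := mu_aux (size b) a b.

Definition descents (pi : seq nat) : nat :=
  count (fun i => nth 0 pi i > nth 0 pi i.+1) (iota 0 (size pi).-1).

From mathcomp Require Import all_boot all_order all_algebra zify.
Set Implicit Arguments. Unset Strict Implicit. Unset Printing Implicit Defensive.
Import GRing.Theory Num.Theory.

(* Write z <= pi for pattern containment.  Unfolding the Moebius recursion,
   mu(1,pi) + mu(21,pi) = - sum_{21 <= z < pi} (mu(1,z) + mu(21,z))
                          - sum_{1 <= z < pi, z avoids 21} mu(1,z).
   Descents can only decrease under pattern containment, so every z with
   21 <= z <= pi again has exactly one descent and the first sum vanishes by
   induction on the length of pi.  The permutations avoiding 21 are the
   identities 12...k, and mu(1, 12...k) is 1, -1, 0 for k = 1, 2, >= 3; a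
   permutation with one descent and length at least 3 contains 12, so the second
   sum is 1 - 1 = 0.  The base case pi = 21 is a direct computation. *)

Lemma mem_subseqs s t : (t \in subseqs s) = subseq t s.
Proof.
elim: s t => [|x s IH] [|y t] //=; rewrite mem_cat IH ?sub0seq ?orbT //.
have [->|ne] := eqVneq y x.
  have cons_inj : injective (cons x) by move=> ? ? [].
  rewrite (mem_map cons_inj) IH.
  by apply/orP/idP => [[] // /(subseq_trans (subseq_cons t x))|->]; last left.
case: mapP => // -[u _ [eyx _]].
by rewrite eyx eqxx in ne.
Qed.

Lemma containsP a b : reflect (exists2 t, subseq t b & std t = a) (contains a b).
Proof.
apply: (iffP hasP) => -[t].
  by rewrite mem_subseqs => tb /eqP; exists t.
by rewrite -mem_subseqs => tb eta; exists t; rewrite ?eta.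
Qed.

Definition rank (t : seq nat) (x : nat) : nat := (count (fun y => y < x) t).+1.

Lemma stdE t : std t = map (rank t) t.
Proof. by []. Qed.

Lemma count_ltn_subpred (p q : pred nat) s w :
  subpred p q -> w \in s -> q w -> ~~ p w -> count p s < count q s.
Proof.
move=> pq ws qw npw; rewrite -[count q s]size_filter -(count_predC p (filter q s)) count_filter.
rewrite (@eq_count _ _ p) => [|z]; last by rewrite /= andb_idr //; apply: pq.
rewrite -addn1 leq_add2l -has_count; apply/hasP; exists w => //.
by rewrite mem_filter qw.
Qed.

Lemma rank_mono t : {in t &, {mono rank t : x y / x < y}}.
Proof.
move=> x y xt yt; rewrite /rank ltnS.
have [xy|yx] := ltnP x y.
  apply: (count_ltn_subpred (w := x)) => //= [z zx|]; last by rewrite ltnn.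
  exact: ltn_trans xy.
apply/negbTE; rewrite -leqNgt; apply: sub_count => z /= zy.
exact: leq_trans zy yx.
Qed.

Lemma std_map (g : nat -> nat) t :
  {in t &, {mono g : x y / x < y}} -> std (map g t) = std t.
Proof.
move=> g_mono; rewrite /std -map_comp; apply/eq_in_map => x xt /=.
by rewrite count_map; congr _.+1; apply: eq_in_count => y yt /=; apply: g_mono.
Qed.

Lemma std_mask m t : std (mask m (std t)) = std (mask m t).
Proof.
by rewrite [std t]stdE -map_mask std_map // => x y /mem_mask xt /mem_mask yt; apply: rank_mono.
Qed.

Lemma size_std t : size (std t) = size t.
Proof. exact: size_map. Qed.

Lemma contains_trans a b c : contains a b -> contains b c -> contains a c.
Proof.
move=> /containsP[u /subseqP[m sm ->] <-] /containsP[t tc tb].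
rewrite -tb size_std in sm *.
apply/containsP; exists (mask m t); last by rewrite std_mask.
by apply: subseq_trans tc; apply/subseqP; exists m.
Qed.

Lemma contains_subseq a b c : contains a b -> subseq b c -> contains a c.
Proof.
by move=> /containsP[t tb <-] bc; apply/containsP; exists t => //; apply: subseq_trans bc.
Qed.

Lemma contains_nil a : contains a [::] = (a == [::]).
Proof. by rewrite /contains /= orbF eq_sym. Qed.

Lemma contains1 z : contains [:: 1] z = (z != [::]).
Proof.
case: z => [|x z] //; apply/containsP; exists [:: x]; last by rewrite /std /= ltnn.
by rewrite sub1seq mem_head.
Qed.

Lemma descents_cons2 x y s : descents [:: x, y & s] = (y < x) + descents (y :: s).
Proof. by rewrite /descents /= -[1]/(1 + 0) iotaDl count_map. Qed.

Lemma descents_map (g : nat -> nat) t :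
  {in t &, {mono g : x y / x < y}} -> descents (map g t) = descents t.
Proof.
elim: t => [|x [|y t] IH] //= g_mono; rewrite !descents_cons2 g_mono ?inE ?eqxx ?orbT //.
by congr (_ + _); apply: IH => u v uyt vyt; apply: g_mono; rewrite inE ?uyt ?vyt orbT.
Qed.

Lemma descents_std t : descents (std t) = descents t.
Proof. by rewrite stdE; apply/descents_map/rank_mono. Qed.

Lemma descents_cons_subseq x s t :
  subseq t s -> descents (x :: t) <= descents (x :: s).
Proof.
have descents_insert x' y u : descents (x' :: u) <= descents [:: x', y & u].
  case: u => [|w u]; rewrite !descents_cons2 ?addnA ?leq_add2r //.
  by case: (ltnP w x') => //= wx; case: (ltnP y x') => //= xy; rewrite (leq_trans wx xy).
elim: s x t => [|y s IH] x [|z t] //=.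
have [<-|_] := eqVneq z y.
  by rewrite !descents_cons2 leq_add2l; apply: IH.
by move=> /(IH x) /leq_trans; apply.
Qed.

Lemma descents_subseq s t : subseq t s -> descents t <= descents s.
Proof.
(* A leading 0 creates no descent, so both sequences can be given a common head. *)
have descents_cons0 u : descents (0 :: u) = descents u by case: u => // w u; rewrite descents_cons2.
by rewrite -(descents_cons0 s) -(descents_cons0 t); apply: descents_cons_subseq.
Qed.

Lemma descents_contains a b : contains a b -> descents a <= descents b.
Proof. by move=> /containsP[t tb <-]; rewrite descents_std; apply: descents_subseq. Qed.

Lemma descents_sorted s : sorted ltn s -> descents s = 0.
Proof.
elim: s => [|x [|y s] IH] //= /andP[xy ys].
by rewrite descents_cons2 IH // ltnNge ltnW.
Qed.

Lemma std_pair x y : x != y -> std [:: x; y] = if x < y then [:: 1; 2] else [:: 2; 1].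
Proof. by rewrite /std /= !ltnn; case: ltngtP => // ->; rewrite eqxx. Qed.

Lemma avoid_pairwise (r : rel nat) p z :
    (forall x y, x != y -> ~~ r x y -> std [:: x; y] = p) ->
  uniq z -> ~~ contains p z -> pairwise r z.
Proof.
move=> std_xy; elim: z => [|x z IH] //= /andP[xz uz] nc; apply/andP; split.
  apply/allP => y yz; apply: contraNT nc => nr; apply/containsP.
  exists [:: x; y]; first by rewrite /= eqxx sub1seq.
  by apply: std_xy nr; apply: contraNneq xz => ->.
by apply: IH uz _; apply: contraNN nc => /contains_subseq; apply; apply: subseq_cons.
Qed.

Lemma avoid21_sorted z : uniq z -> ~~ contains [:: 2; 1] z -> sorted ltn z.
Proof.
move=> uz nc; rewrite sorted_pairwise; last exact: ltn_trans.
by apply: avoid_pairwise uz nc => x y /std_pair -> nxy; rewrite ifN.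
Qed.

Lemma contains21_descents z : contains [:: 2; 1] z -> 0 < descents z.
Proof. exact: descents_contains. Qed.

Lemma contains12 z : uniq z -> 2 < size z -> descents z <= 1 -> contains [:: 1; 2] z.
Proof.
move=> uz sz; apply: contraTT => nc.
have: pairwise (fun x y => y < x) z.
  apply: avoid_pairwise uz nc => x y xy; rewrite -leqNgt std_pair //.
  by rewrite ltn_neqAle xy => ->.
case: z sz {uz nc} => [|x [|y [|w s]]] //= _ /and3P[/and3P[yx wx _] /andP[wy _] _].
by rewrite !descents_cons2 yx wy.
Qed.

Lemma count_ltn_iota x m n : count (fun y => y < x) (iota m n) = minn (x - m) n.
Proof. by elim: n m => [|n IH] m /=; rewrite ?minn0 // IH; case: ltnP => /=; lia. Qed.

Lemma std_iota k : std (iota 1 k) = iota 1 k.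
Proof.
rewrite /std -[RHS]map_id; apply/eq_in_map => x; rewrite mem_iota count_ltn_iota /=.
lia.
Qed.

Lemma contains_iota j k : j <= k -> contains (iota 1 j) (iota 1 k).
Proof.
move=> jk; apply/containsP; exists (iota 1 j); last exact: std_iota.
by rewrite -(subnKC jk) iotaD prefix_subseq.
Qed.

Lemma iota_avoid21 k : ~~ contains [:: 2; 1] (iota 1 k).
Proof.
by apply: contraTN isT => /contains21_descents; rewrite descents_sorted ?iota_ltn_sorted.
Qed.

Lemma perm_iota_avoid21 z k :
  perm_eq z (iota 1 k) -> ~~ contains [:: 2; 1] z -> z = iota 1 k.
Proof.
move=> zk nc; have uz : uniq z by rewrite (perm_uniq zk) iota_uniq.
apply: (irr_sorted_eq ltn_trans ltnn (avoid21_sorted uz nc) (iota_ltn_sorted 1 k)).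
exact: perm_mem.
Qed.

Lemma perms_belowP z b : z \in perms_below b -> is_perm z /\ size z < size b.
Proof.
move=> /flatten_mapP[k]; rewrite mem_iota /= mem_permutations => kb zk.
by rewrite /is_perm (perm_size zk) size_iota.
Qed.

Local Open Scope ring_scope.

Lemma mu_aux_fuel k a b : (size b <= k)%N -> mu_aux k a b = mu a b.
Proof.
have [n] := ubnP (size b); elim: n k b => // n IH k b; rewrite ltnS => bn bk.
rewrite /mu; case: k bk => [|k] bk; first by rewrite leqn0 in bk; rewrite (eqP bk).
case sb: (size b) => [|m].
  by move/size0nil: sb => ->; rewrite /= contains_nil; case: eqP.
rewrite /=; case: eqP => // _; case: ifP => // _; congr (- _).
rewrite big_seq_cond [RHS]big_seq_cond; apply: eq_bigr => z /andP[/perms_belowP[_ zb] _].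
by rewrite sb in zb bk bn; rewrite !IH ?(leq_trans zb bn) // -ltnS (leq_trans zb bk).
Qed.

Lemma mu_unfold a b : a != b -> contains a b ->
  mu a b = - \sum_(z <- perms_below b | contains a z && contains z b) mu a z.
Proof.
move=> ab cab; rewrite {1}/mu; case sb: (size b) => [|n].
  by move/size0nil: sb => b0; subst b; rewrite contains_nil (negbTE ab) in cab.
rewrite /= (negbTE ab) cab; congr (- _).
rewrite big_seq_cond [RHS]big_seq_cond; apply: eq_bigr => z /andP[/perms_belowP[_ zb] _].
by apply: mu_aux_fuel; rewrite -ltnS -sb.
Qed.

Lemma sum_perms_below_avoid21 b (P : pred (seq nat)) (F : seq nat -> int) :
    (forall z, uniq z -> P z -> ~~ contains [:: 2; 1] z) ->
  \sum_(z <- perms_below b | P z) F z =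
  \sum_(0 <= k < size b | P (iota 1 k)) F (iota 1 k).
Proof.
move=> P_avoid21; rewrite big_flatten big_map [RHS]big_mkcond /index_iota subn0.
apply: eq_bigr => k _.
rewrite big_mkcond (bigD1_seq (iota 1 k)) ?permutations_uniq ?mem_permutations //=.
rewrite big1_seq ?addr0 // => z /andP[zk]; rewrite mem_permutations => pz.
case: ifP => // Pz; have uz : uniq z by rewrite (perm_uniq pz) iota_uniq.
by rewrite (perm_iota_avoid21 pz (P_avoid21 _ uz Pz)) eqxx in zk.
Qed.

Lemma sum_delta1_delta2 n (P : pred nat) : (1 < n)%N -> P 1%N -> P 2%N ->
  \sum_(0 <= k < n | P k) ((k == 1%N)%:R - (k == 2%N)%:R : int) = (n == 2%N)%:R.
Proof.
case: n => [|[|[|n]]] // _ P1 P2; rewrite big_mkcond !big_nat_recl //= P1 ?P2.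
  by rewrite big_geq // subr0 if_same.
by rewrite big1_seq => [|i _]; rewrite ?subrr if_same // addrA addrN.
Qed.

Lemma mu_one_iota k : mu [:: 1%N] (iota 1 k) = (k == 1%N)%:R - (k == 2%N)%:R.
Proof.
elim/ltn_ind: k => -[|[|k]] IH //.
have c1 : contains [:: 1%N] (iota 1 k.+2) by rewrite contains1.
have ne : [:: 1%N] != iota 1 k.+2 by apply/eqP => /(congr1 size); rewrite size_iota.
rewrite (mu_unfold ne c1) sum_perms_below_avoid21 => [|z _ /andP[_ zk]]; last first.
  by apply: contraNN (iota_avoid21 k.+2) => /contains_trans; apply.
rewrite size_iota big_nat_cond (eq_bigr (fun j => (j == 1%N)%:R - (j == 2%N)%:R)).
  by rewrite -big_nat_cond sum_delta1_delta2 ?contains1 ?contains_iota //; case: k {IH c1 ne}.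
by move=> j /andP[/andP[_ jk] _]; apply: IH.
Qed.

Lemma mu_one_21 : mu [:: 1%N] [:: 2%N; 1%N] = -1.
Proof. by rewrite /mu /= unlock. Qed.

Lemma perm_descents_contains21 pi :
  is_perm pi -> (0 < descents pi)%N -> contains [:: 2%N; 1%N] pi.
Proof.
move=> pp; apply: contraTT => nc.
by rewrite (perm_iota_avoid21 pp nc) descents_sorted ?iota_ltn_sorted.
Qed.

Lemma one_descent_size pi :
  is_perm pi -> descents pi = 1%N -> [:: 2%N; 1%N] != pi -> (2 < size pi)%N.
Proof.
case: pi => [|x [|y [|w s]]] //; rewrite /is_perm -mem_permutations !inE.
by case/orP=> /eqP ->.
Qed.

Lemma sum_mu_one_avoid21 pi : (2 < size pi)%N -> contains [:: 1%N; 2%N] pi ->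
  \sum_(z <- perms_below pi | contains [:: 1%N] z && contains z pi &&
                              ~~ contains [:: 2%N; 1%N] z) mu [:: 1%N] z = 0.
Proof.
move=> pi3 c12; rewrite sum_perms_below_avoid21 => [|z _ /andP[] //].
under eq_bigr do rewrite mu_one_iota.
have c1 : contains [:: 1%N] pi by apply: contains_trans c12.
by rewrite sum_delta1_delta2 ?iota_avoid21 ?andbT ?c1 ?c12 ?(ltnW pi3) ?gtn_eqF.
Qed.

Lemma mu_one_add_mu21 pi :
  is_perm pi -> descents pi = 1%N -> mu [:: 1%N] pi + mu [:: 2%N; 1%N] pi = 0.
Proof.
have [n] := ubnP (size pi); elim: n pi => // n IH pi; rewrite ltnS => pin pp d1.
have [<-|ne21] := eqVneq [:: 2%N; 1%N] pi; first by rewrite mu_one_21.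
have pi3 := one_descent_size pp d1 ne21.
have c21 : contains [:: 2%N; 1%N] pi by rewrite perm_descents_contains21 ?d1.
have c1 : contains [:: 1%N] pi by rewrite contains1 -size_eq0 -lt0n (ltn_trans _ pi3).
have c12 : contains [:: 1%N; 2%N] pi.
  by apply: contains12; rewrite ?d1 // (perm_uniq pp) iota_uniq.
have ne1 : [:: 1%N] != pi by apply: contraTneq pi3 => <-.
rewrite (mu_unfold ne1 c1) (mu_unfold ne21 c21) (bigID (contains [:: 2%N; 1%N])) /=.
rewrite sum_mu_one_avoid21 // addr0 -opprD.
have -> : \sum_(z <- perms_below pi | contains [:: 1%N] z && contains z pi &&
                                    contains [:: 2%N; 1%N] z) mu [:: 1%N] z =
          \sum_(z <- perms_below pi | contains [:: 2%N; 1%N] z && contains z pi) mu [:: 1%N] z.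
  apply: eq_bigl => z; case c21z: (contains [:: 2%N; 1%N] z); rewrite ?andbF // andbT.
  by rewrite (contains_trans (isT : contains [:: 1%N] [:: 2%N; 1%N]) c21z).
rewrite -big_split big1_seq ?oppr0 // => z /andP[/andP[c21z zpi] /perms_belowP[pz zn]].
apply: IH => //; first exact: leq_trans zn pin.
by apply/eqP; rewrite eqn_leq contains21_descents // andbT -d1 descents_contains.
Qed.

Theorem mainTheorem9 (pi : seq nat) :
  is_perm pi -> descents pi = 1%N ->
  mu [:: 1%N] pi = (- mu [:: 2%N; 1%N] pi)%R.
Proof. by move=> pp d1; apply/eqP; rewrite -addr_eq0 mu_one_add_mu21. Qed.
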